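(* Let $(e_{m,n})_{m,n\in\mathbb N}$ be nonnegative random variables such that for each $n\in\mathbb N$, $(e_{m,n})_{m\in\mathbb N}$ is an asymptotic e-variable for $\mathcal P$. For $m,n\in\mathbb N$ set $\mathcal F_{m,n}=\sigma(e_{m,i}: i\le n)$ and $E_{m,n}=\prod_{i=0}^n e_{m,i}$. Assume that for every $m\in\mathbb N$ there is $d_m\ge 0$ with $$\mathbb E_P[e_{m,n+1}\mid\mathcal F_{m,n}]\le 1+d_m\quad P\text{-a.s., for all }P\in\mathcal P,\ n\in\mathbb N.$$ If $d_m\to0$ as $m\to\infty$, then $E$ has the asymptotic supermartingale property for $\mathcal F$ uniformly in $\mathcal P$; and in this case $E$ is an $r$-asymptotic e-process for $\mathcal P$ and $\mathcal F$ for every integer sequence $r=(r_m)_{m\in\mathbb N}\subset\mathbb N$ with $r_md_m\to0$ as $m\to\infty$.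
   Context: $(\Omega,\mathcal A)$ is a measurable space, $\mathcal P$ a set of probability measures on it, $\mathbb N=\{0,1,\dots\}$. Nonnegative random variables take values in $[0,\infty]$ with $\mathbb E_P[X]:=\infty$ if not $P$-integrable; $X_\infty:=\limsup_nX_n$. A sequence of nonnegative random variables $(e_m)_{m\in\mathbb N}$ is a (uniformly strongly) asymptotic e-variable for $\mathcal P$ if $\limsup_{m\to\infty}\sup_{P\in\mathcal P}\mathbb E_P[e_m]\le1$. For $P\in\mathcal P$, $\delta_{m,n}=\mathbb E_P[E_{m,n+1}\mid\mathcal F_{m,n}]-E_{m,n}$ if $E_{m,n+1}$ is $P$-integrable and $\delta_{m,n}=\infty$ otherwise; $x^+=\max\{x,0\}$; $E$ has the asymptotic supermartingale property if $\lim_m\sup_{P\in\mathcal P}\mathbb E_P[\delta^+_{m,n}]=0$ for every $n$. For a filtration $\mathcal G$ and $\rho\in\mathbb N\cup\{\infty\}$, $\mathcal T(\rho,\mathcal G,\mathcal P)$ is the set of $\mathcal G$-stopping times $\tau$ (values in $\mathbb N\cup\{\infty\}$) with $P[\tau\le\rho]=1$ for all $P\in\mathcal P$; $\mathcal T(r,\mathcal F,\mathcal P)$ is the set of sequences $(\tau_m)$ with $\tau_m\in\mathcal T(r_m,\mathcal F_{m,\bullet},\mathcal P)$. $E$ is an $r$-asymptotic e-process if for every $\tau\in\mathcal T(r,\mathcal F,\mathcal P)$, $\limsup_m\sup_{P\in\mathcal P}\mathbb E_P[E_{m,\tau_m}]\le1$. *)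

From HB Require Import structures.
From mathcomp Require Import all_boot all_order all_algebra.
From mathcomp Require Import all_classical all_reals all_analysis measurable_realfun.
Import Order.TTheory GRing.Theory Num.Theory.
Set Implicit Arguments.
Unset Strict Implicit.
Unset Printing Implicit Defensive.
Local Open Scope classical_set_scope.
Local Open Scope ring_scope.
Local Open Scope ereal_scope.

Definition G_measurable {d : measure_display} {T : measurableType d} {R : realType}
  (G : set (set T)) (g : T -> \bar R) : Prop :=
  forall B : set (\bar R), measurable B -> G (g @^-1` B).

(* g is a (version of the) conditional expectation E_P[X | G] of the
   nonnegative random variable X (generalized, [0,oo]-valued conditional
   expectation, which always exists and is a.s. unique). *)
Definition is_cond_exp {d : measure_display} {T : measurableType d} {R : realType}
  (P : probability T R) (G : set (set T)) (X g : T -> \bar R) : Prop :=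
  [/\ G_measurable G g, (forall x, 0 <= g x) &
      forall A, G A -> \int[P]_(x in A) X x = \int[P]_(x in A) g x].

Definition gen_filtration {d : measure_display} {T : measurableType d} {R : realType}
  (e : nat -> nat -> T -> \bar R) (m n : nat) : set (set T) :=
  <<s [set A | exists i, (i <= n)%N /\
        exists B : set (\bar R), measurable B /\ A = e m i @^-1` B] >>.

Definition prodE {d : measure_display} {T : measurableType d} {R : realType}
  (e : nat -> nat -> T -> \bar R) (m n : nat) (x : T) : \bar R :=
  \prod_(i < n.+1) e m i x.

(* (e_m) is an asymptotic e-variable: limsup_m sup_{P in Pset} E_P[e_m] <= 1,
   unfolded with epsilons. *)
Definition asymp_evar {d : measure_display} {T : measurableType d} {R : realType}
  (Pset : set (probability T R)) (f : nat -> T -> \bar R) : Prop :=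
  forall eps : R, (0 < eps)%R ->
    \forall m \near \oo, forall P, Pset P -> \int[P]_x f m x <= 1 + eps%:E.

(* E_P[delta_n^+] <= c, where delta_n = E_P[E_{n+1} | F_n] - E_n if E_{n+1}
   is P-integrable and delta_n = +oo otherwise. *)
Definition exp_delta_plus_le {d : measure_display} {T : measurableType d} {R : realType}
  (P : probability T R) (F : nat -> set (set T)) (E : nat -> T -> \bar R)
  (n : nat) (c : \bar R) : Prop :=
  P.-integrable setT (E n.+1) /\
  forall g, is_cond_exp P (F n) (E n.+1) g ->
    \int[P]_x maxe (g x - E n x) 0 <= c.

(* asymptotic supermartingale property: for every n,
   lim_m sup_{P in Pset} E_P[delta^+_{m,n}] = 0 (these are nonnegative). *)
Definition asymp_supermart {d : measure_display} {T : measurableType d} {R : realType}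
  (Pset : set (probability T R)) (F : nat -> nat -> set (set T))
  (E : nat -> nat -> T -> \bar R) : Prop :=
  forall (n : nat) (eps : R), (0 < eps)%R ->
    \forall m \near \oo, forall P, Pset P -> exp_delta_plus_le P (F m) (E m) n eps%:E.

(* stopping times with values in N u {oo}; None stands for oo *)
Definition stopping_time {d : measure_display} {T : measurableType d}
  (G : nat -> set (set T)) (tau : T -> option nat) : Prop :=
  forall n : nat, G n [set x | exists k, (k <= n)%N /\ tau x = Some k].

Definition bounded_by {d : measure_display} {T : measurableType d} {R : realType}
  (Pset : set (probability T R)) (tau : T -> option nat) (rho : nat) : Prop :=
  forall P, Pset P -> P [set x | exists k, (k <= rho)%N /\ tau x = Some k] = 1.

Definition stopped {d : measure_display} {T : measurableType d} {R : realType}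
  (E : nat -> T -> \bar R) (tau : T -> option nat) (x : T) : \bar R :=
  match tau x with Some k => E k x | None => limn_esup (fun n => E n x) end.

Definition r_asymp_eprocess {d : measure_display} {T : measurableType d} {R : realType}
  (Pset : set (probability T R)) (r : nat -> nat) (F : nat -> nat -> set (set T))
  (E : nat -> nat -> T -> \bar R) : Prop :=
  forall tau : nat -> T -> option nat,
    (forall m, stopping_time (F m) (tau m) /\ bounded_by Pset (tau m) (r m)) ->
    forall eps : R, (0 < eps)%R ->
      \forall m \near \oo, forall P, Pset P ->
        \int[P]_x stopped (E m) (tau m) x <= 1 + eps%:E.

From HB Require Import structures.
From mathcomp Require Import all_boot all_order all_algebra.
From mathcomp Require Import all_classical all_reals all_analysis measurable_realfun.
From mathcomp Require Import lra.
Import Order.TTheory GRing.Theory Num.Theory.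
Local Open Scope classical_set_scope.
Local Open Scope ring_scope.
Local Open Scope ereal_scope.

(* The hypothesis bounds by 1 + d_m the conditional mean of each new factor
   e_{m,n+1} given F_{m,n}.  As E_{m,n} is F_{m,n}-measurable it can be pulled
   out of this conditional expectation, so that
   int_A E_{m,n+1} <= (1 + d_m) int_A E_{m,n} for every A in F_{m,n}.
   For A = {delta_{m,n} > 0} this gives
   E[delta^+_{m,n}] <= d_m E[E_{m,n}] <= d_m (1 + d_m)^n E[e_{m,0}].
   For A = {tau > j} it shows that the process stopped at min(tau, j) has
   expectation at most (1 + d_m)^j E[e_{m,0}], so E[E_{m,tau}] is at most
   exp(r_m d_m) E[e_{m,0}] when tau <= r_m.  Both bounds have the required
   limits because E[e_{m,0}] is asymptotically at most 1.
   Nothing is assumed integrable, so conditional expectations are [0, oo]-valued;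
   to make use of the hypothesis, one version is built as the supremum of the
   Radon-Nikodym densities of the truncations min(X, k) with respect to P
   restricted to the sub-sigma-algebra. *)

Section subsigma.
Context {d : measure_display} {T : measurableType d}.

(* Intersecting with [measurable] makes every event of [subsigma D] an event
   of [T], whatever [D] is. *)
Definition subsigma (D : set (set T)) := g_sigma_algebraType (D `&` measurable).

Definition subsigma_id (D : set (set T)) : T -> subsigma D := id.

Variable D : set (set T).

Lemma subsigma_measurable (A : set (subsigma D)) :
  measurable A -> d.-measurable (A : set T).
Proof.
by move=> mA; apply: (smallest_sub (@sigma_algebra_measurable _ T)) mA => B [].
Qed.

Lemma subsigma_sigma (A : set T) : (@measurable _ (subsigma D)) A -> <<s D >> A.
Proof. by apply: sub_sigma_algebra2 => B []. Qed.

Lemma subsigma_measurable_fun {d' : measure_display} {U : measurableType d'}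
  (f : T -> U) : measurable_fun setT (f : subsigma D -> U) -> measurable_fun setT f.
Proof. by move=> mf _ B mB; apply: subsigma_measurable; exact: mf. Qed.

Lemma measurable_subsigma_id : measurable_fun setT (subsigma_id D).
Proof. by move=> _ A mA; rewrite setTI; exact: subsigma_measurable. Qed.

HB.instance Definition _ :=
  isMeasurableFun.Build _ _ _ _ (subsigma_id D) measurable_subsigma_id.

Hypothesis mD : D `<=` measurable.

Lemma sigma_subsigma (A : set T) : <<s D >> A -> (@measurable _ (subsigma D)) A.
Proof. by apply: sub_sigma_algebra2 => B DB; split => //; exact: mD. Qed.

Lemma G_measurable_subsigmaP {R : realType} (f : T -> \bar R) :
  G_measurable <<s D >> f <-> measurable_fun setT (f : subsigma D -> \bar R).
Proof.
split=> mf.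
  by move=> _ B mB; rewrite setTI; apply: sigma_subsigma; exact: mf.
by move=> B mB; apply: subsigma_sigma; have := mf measurableT B mB; rewrite setTI.
Qed.

End subsigma.
Arguments subsigma_measurable {d T D A}.
Arguments subsigma_sigma {d T D A}.
Arguments subsigma_measurable_fun {d T D d' U f}.
Arguments sigma_subsigma {d T D} mD {A}.
Arguments G_measurable_subsigmaP {d T D} mD {R f}.

Section subsigma_prob.
Context {d : measure_display} {T : measurableType d} {R : realType}.
Variable P : probability T R.

Definition subsigma_prob D : probability (subsigma D) R :=
  distribution P (subsigma_id D).

Lemma integral_subsigma_prob D (A : set (subsigma D)) (f : T -> \bar R) :
  measurable A -> measurable_fun setT (f : subsigma D -> \bar R) ->
  (forall x, 0 <= f x) ->
  \int[subsigma_prob D]_(x in A) f x = \int[P]_(x in A) f x.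
Proof.
move=> mA mf f0.
exact: (ge0_integral_pushforward (measurable_subsigma_id D) P mA
  (measurable_funTS mf) (fun x _ => f0 x)).
Qed.

Lemma ae_le_of_subsigma_integral_le D (u v : T -> \bar R) :
  measurable_fun setT (u : subsigma D -> \bar R) ->
  measurable_fun setT (v : subsigma D -> \bar R) ->
  P.-integrable setT u -> P.-integrable setT v ->
  (forall x, u x \is a fin_num) -> (forall x, v x \is a fin_num) ->
  (forall A : set (subsigma D), measurable A ->
    \int[P]_(x in A) u x <= \int[P]_(x in A) v x) ->
  {ae P, forall x, u x <= v x}.
Proof.
move=> mu mv iu iv fu fv le_uv.
have mBD : (@measurable _ (subsigma D)) [set x | v x < u x].
  by rewrite -[X in measurable X]setTI; exact: measurable_lte.
set B := [set x | v x < u x] in mBD *.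
have mB : measurable (B : set T) := subsigma_measurable mBD.
have vu_ge0 x : B x -> 0 <= u x - v x by move=> Bx; rewrite sube_ge0 ?fv// ltW.
have int_uv0 : \int[P]_(x in B) (u x - v x) = 0.
  have iuB : P.-integrable B u by exact: integrableS iu.
  have ivB : P.-integrable B v by exact: integrableS iv.
  apply/eqP; rewrite eq_le integral_ge0 ?andbT//.
  by rewrite integralB// sube_le0 le_uv.
have int_abs0 : \int[P]_(x in B) `|u x - v x| = 0.
  by rewrite -int_uv0; apply: eq_integral => x /[!inE] Bx; rewrite gee0_abs ?vu_ge0.
have muv : measurable_fun B (fun x => u x - v x).
  apply/measurable_funTS/emeasurable_funB.
    exact: subsigma_measurable_fun mu.
  exact: subsigma_measurable_fun mv.
have [N [mN N0 BN]] := (ae_eq_integral_abs P mB muv).1 int_abs0.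
exists N; split => // x /= /negP; rewrite -ltNge => vux; apply: BN => /=.
by apply/not_implyP; split => //; apply/eqP; rewrite gt_eqF// sube_gt0 ?fv.
Qed.

End subsigma_prob.

Section truncation.
Context {d : measure_display} {T : measurableType d} {R : realType}.
Implicit Types (X : T -> \bar R) (k : nat).

(* The guard makes [trunc X k] measurable, nonnegative and bounded for every
   [X], so that the measures it induces below need no hypothesis on [X]. *)
Definition trunc X k x : \bar R :=
  if `[< measurable_fun setT X >] then mine (maxe (X x) 0) k%:R%:E else 0.

Lemma trunc_ge0 X k x : 0 <= trunc X k x.
Proof.
rewrite /trunc; case: ifPn => _ //.
by rewrite le_min le_max lexx orbT lee_fin ler0n.
Qed.

Lemma trunc_le X k x : trunc X k x <= k%:R%:E.
Proof. by rewrite /trunc; case: ifPn => _; rewrite ?ge_min ?lexx ?orbT// lee_fin. Qed.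

Lemma measurable_trunc X k : measurable_fun setT (trunc X k).
Proof.
rewrite /trunc; case: asboolP => mX; last exact: measurable_cst.
by apply: measurable_mine => //; exact: measurable_maxe.
Qed.

Lemma truncE X k x : measurable_fun setT X -> 0 <= X x ->
  trunc X k x = mine (X x) k%:R%:E.
Proof. by move=> mX X0; rewrite /trunc; case: asboolP => // _; rewrite max_l. Qed.

Lemma trunc_nondecreasing X x : {homo trunc X ^~ x : k l / (k <= l)%N >-> k <= l}.
Proof.
apply/nondecreasing_seqP => k; rewrite /trunc; case: ifPn => _ //.
by rewrite le_min ge_min lexx /= ge_min lee_fin ler_nat leqnSn orbT.
Qed.

Lemma mule_trunc_cvg X (a : \bar R) x : measurable_fun setT X ->
  0 <= X x -> 0 <= a -> a * trunc X k x @[k --> \oo] --> a * X x.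
Proof.
move=> mX X0 a0; under eq_fun do rewrite truncE//; move: X0.
case: (X x) => [r r0|_|//].
  apply: cvg_near_cst; near=> k; rewrite min_l// lee_fin.
  by near: k; exact: nbhs_infty_ger.
under eq_fun do rewrite min_r ?leey//.
move: a0; case: a => [s|_|//] s0.
- have [->|s_neq0] := eqVneq s 0%R.
    by rewrite mul0e; apply: cvg_near_cst; near=> k; rewrite mul0e.
  have s_gt0 : (0 < s)%R by rewrite lt_def s_neq0 -lee_fin.
  rewrite mulry gtr0_sg// mul1e; apply/cvgeyPge => A; near=> k.
  rewrite -EFinM lee_fin -ler_pdivrMl//.
  by near: k; exact: nbhs_infty_ger.
- rewrite mulyy; apply: cvg_near_cst; near=> k.
  rewrite mulyr gtr0_sg ?mul1e// (@lt_le_trans _ _ 1%R)//.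
  by near: k; exact: nbhs_infty_ger.
Unshelve. all: by end_near.
Qed.

End truncation.

Section cond_exp_existence.
Context {d : measure_display} {T : measurableType d} {R : realType}.
Variable P : probability T R.
Implicit Types (D : set (set T)) (X : T -> \bar R) (k : nat).

Lemma integrable_trunc X k : P.-integrable setT (trunc X k).
Proof.
apply/integrableP; split; first exact: measurable_trunc.
apply: (@le_lt_trans _ _ (\int[P]_x (cst k%:R%:E) x)); last first.
  rewrite integral_cst//=.
  rewrite (le_lt_trans (lee_wpmul2l _ (probability_le1 P measurableT)))//.
  by rewrite mule1 ltry.
apply: ge0_le_integral => //; first exact/measurableT_comp/measurable_trunc.
by move=> x _; rewrite gee0_abs ?trunc_ge0 ?trunc_le.
Qed.

Lemma integral_mule_trunc_cvg X (phi : T -> \bar R) (A : set T) :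
  measurable A -> measurable_fun setT X -> (forall x, 0 <= X x) ->
  measurable_fun setT phi -> (forall x, 0 <= phi x) ->
  \int[P]_(x in A) (phi x * X x) =
  limn (fun k => \int[P]_(x in A) (phi x * trunc X k x)).
Proof.
move=> mA mX X0 mphi phi0; rewrite -monotone_convergence//.
- by apply: eq_integral => x _; apply/esym/cvg_lim => //; exact: mule_trunc_cvg.
- move=> k; apply/measurable_funTS/emeasurable_funM => //.
  exact: measurable_trunc.
- by move=> k x _; rewrite mule_ge0 ?trunc_ge0.
- by move=> x _ k l kl; rewrite lee_wpmul2l ?trunc_nondecreasing.
Qed.

Definition trunc_measure X k : set T -> \bar R :=
  fun A => \int[P]_(x in A) trunc X k x.

Definition trunc_measure_sub D X k : set (subsigma D) -> \bar R :=
  fun A => \int[P]_(x in A) trunc X k x.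

Let trunc_measure0 X k : trunc_measure X k set0 = 0.
Proof. exact: integral_set0. Qed.

Let trunc_measure_ge0 X k A : 0 <= trunc_measure X k A.
Proof. by apply: integral_ge0 => x _; exact: trunc_ge0. Qed.

Let trunc_measure_sigma_additive X k : semi_sigma_additive (trunc_measure X k).
Proof.
by apply: semi_sigma_additive_nng_induced; [exact: measurable_trunc|exact: trunc_ge0].
Qed.

HB.instance Definition _ X k := isMeasure.Build _ _ _ (trunc_measure X k)
  (trunc_measure0 X k) (trunc_measure_ge0 X k) (@trunc_measure_sigma_additive X k).

Let trunc_measure_fin X k : fin_num_fun (trunc_measure X k).
Proof.
move=> A mA; apply: integrable_fin_num => //.
exact: integrableS (integrable_trunc X k).
Qed.

HB.instance Definition _ X k :=
  Measure_isFinite.Build _ _ _ (trunc_measure X k) (trunc_measure_fin X k).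

Let trunc_measure_sub0 D X k : trunc_measure_sub D X k set0 = 0.
Proof. exact: integral_set0. Qed.

Let trunc_measure_sub_ge0 D X k A : 0 <= trunc_measure_sub D X k A.
Proof. exact: trunc_measure_ge0. Qed.

Let trunc_measure_sub_sigma_additive D X k :
  semi_sigma_additive (trunc_measure_sub D X k).
Proof.
move=> F mF tF mUF; apply: (@trunc_measure_sigma_additive X k F _ tF).
- by move=> n; exact: subsigma_measurable (mF n).
- exact: subsigma_measurable mUF.
Qed.

HB.instance Definition _ D X k := isMeasure.Build _ _ _ (trunc_measure_sub D X k)
  (trunc_measure_sub0 D X k) (trunc_measure_sub_ge0 D X k)
  (@trunc_measure_sub_sigma_additive D X k).

Let trunc_measure_sub_fin D X k : fin_num_fun (trunc_measure_sub D X k).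
Proof. by move=> A mA; apply: trunc_measure_fin; exact: subsigma_measurable. Qed.

HB.instance Definition _ D X k := Measure_isFinite.Build _ _ _
  (trunc_measure_sub D X k) (trunc_measure_sub_fin D X k).

Lemma trunc_measure_dominates X k : trunc_measure X k `<< P.
Proof.
move=> N /= PN0 A mA AN; apply: null_set_integral => //; last exact: PN0.
exact/measurable_funTS/measurable_trunc.
Qed.

Lemma trunc_measure_sub_dominates D X k :
  trunc_measure_sub D X k `<< subsigma_prob P D.
Proof.
move=> N /= PN0 A mA AN; apply: null_set_integral; last exact: PN0.
- exact: subsigma_measurable.
- exact/measurable_funTS/measurable_trunc.
Qed.

Lemma integral_trunc_measure X k (A : set T) (phi : T -> \bar R) :
  measurable A -> measurable_fun setT phi -> (forall x, 0 <= phi x) ->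
  \int[trunc_measure X k]_(x in A) phi x = \int[P]_(x in A) (phi x * trunc X k x).
Proof.
move=> mA mphi phi0; have dom := trunc_measure_dominates X k.
pose f := Radon_Nikodym_SigmaFinite.f (trunc_measure X k) P.
have mf : measurable_fun setT f.
  exact: measurable_int (Radon_Nikodym_SigmaFinite.f_integrable dom).
rewrite -(Radon_Nikodym_SigmaFinite.change_of_variables dom) //;
  last exact: measurable_funTS.
have trunc_f : ae_eq P setT (trunc X k) f.
  apply: integral_ae_eq => //; first exact: integrable_trunc.
  by move=> E _ mE; rewrite -(Radon_Nikodym_SigmaFinite.f_integral dom).
apply: ae_eq_integral => //.
- by apply/measurable_funTS/emeasurable_funM.
- by apply/measurable_funTS/emeasurable_funM => //; exact: measurable_trunc.
- have := ae_eqe_mul2l phi (ae_eq_sym trunc_f).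
  by apply: filterS => x + Ax; apply.
Qed.

Definition cond_trunc D X k : T -> \bar R :=
  Radon_Nikodym_SigmaFinite.f (trunc_measure_sub D X k) (subsigma_prob P D).

Lemma cond_trunc_ge0 D X k x : 0 <= cond_trunc D X k x.
Proof.
exact: Radon_Nikodym_SigmaFinite.f_ge0 (trunc_measure_sub_dominates D X k) x.
Qed.

Lemma cond_trunc_fin_num D X k x : cond_trunc D X k x \is a fin_num.
Proof.
exact: Radon_Nikodym_SigmaFinite.f_fin_num (trunc_measure_sub_dominates D X k) x.
Qed.

Lemma measurable_cond_trunc D X k :
  measurable_fun setT (cond_trunc D X k : subsigma D -> \bar R).
Proof.
apply: measurable_int.
exact: Radon_Nikodym_SigmaFinite.f_integrable (trunc_measure_sub_dominates D X k).
Qed.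

Lemma integral_cond_trunc D X k (A : set (subsigma D)) : measurable A ->
  \int[P]_(x in A) cond_trunc D X k x = \int[P]_(x in A) trunc X k x.
Proof.
move=> mA; rewrite -integral_subsigma_prob//; last 2 first.
- exact: measurable_cond_trunc.
- exact: cond_trunc_ge0.
by rewrite -(Radon_Nikodym_SigmaFinite.f_integral (trunc_measure_sub_dominates D X k)).
Qed.

Lemma integrable_cond_trunc D X k : P.-integrable setT (cond_trunc D X k).
Proof.
apply/integrableP; split.
  exact: subsigma_measurable_fun (measurable_cond_trunc D X k).
rewrite (eq_integral (cond_trunc D X k)); last first.
  by move=> x _; rewrite gee0_abs// cond_trunc_ge0.
rewrite (integral_cond_trunc D X k _ measurableT).
have /integrableP[_] := integrable_trunc X k.
by under eq_integral do rewrite gee0_abs ?trunc_ge0//.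
Qed.

(* Both sides are integrals against [trunc_measure X k], by the change of
   variables formula for Radon-Nikodym densities, on [subsigma D] and on [T]. *)
Lemma integral_mule_cond_trunc D X k (A : set (subsigma D)) (phi : T -> \bar R) :
  measurable A -> measurable_fun setT (phi : subsigma D -> \bar R) ->
  (forall x, 0 <= phi x) ->
  \int[P]_(x in A) (phi x * trunc X k x) =
  \int[P]_(x in A) (phi x * cond_trunc D X k x).
Proof.
move=> mA mphi phi0; rewrite -[RHS]integral_subsigma_prob//; last 2 first.
- by apply: emeasurable_funM => //; exact: measurable_cond_trunc.
- by move=> x; rewrite mule_ge0 ?cond_trunc_ge0.
rewrite Radon_Nikodym_SigmaFinite.change_of_variables//; last 2 first.
- exact: trunc_measure_sub_dominates.
- exact: measurable_funTS.
rewrite -integral_trunc_measure//; last 2 first.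
- exact: subsigma_measurable mA.
- exact: subsigma_measurable_fun mphi.
by have := ge0_integral_pushforward (measurable_subsigma_id D) (trunc_measure X k)
  mA (measurable_funTS mphi) (fun x _ => phi0 x).
Qed.

Lemma cond_trunc_nondecreasing_ae D X k :
  {ae P, forall x, cond_trunc D X k x <= cond_trunc D X k.+1 x}.
Proof.
apply: ae_le_of_subsigma_integral_le; try exact: measurable_cond_trunc;
  try exact: integrable_cond_trunc; try exact: cond_trunc_fin_num.
move=> A mA; rewrite !integral_cond_trunc//.
apply: ge0_le_integral; first exact: subsigma_measurable mA.
- by move=> x _; exact: trunc_ge0.
- exact/measurable_funTS/measurable_trunc.
- exact/measurable_funTS/measurable_trunc.
- by move=> x _; exact: trunc_nondecreasing.
Qed.

(* The densities [cond_trunc D X k] increase with [k] only almost surely; their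
   running maximum increases everywhere, as monotone convergence requires. *)
Fixpoint cond_trunc_max D X k x : \bar R :=
  if k is l.+1 then maxe (cond_trunc_max D X l x) (cond_trunc D X k x)
  else cond_trunc D X 0 x.

Lemma cond_trunc_max_ge0 D X k x : 0 <= cond_trunc_max D X k x.
Proof.
by case: k => [|k] /=; rewrite ?cond_trunc_ge0// le_max cond_trunc_ge0 orbT.
Qed.

Lemma cond_trunc_le_max D X k x : cond_trunc D X k x <= cond_trunc_max D X k x.
Proof. by case: k => [|k] //=; rewrite le_max lexx orbT. Qed.

Lemma cond_trunc_max_nondecreasing D X x :
  nondecreasing_seq (cond_trunc_max D X ^~ x).
Proof. by apply/nondecreasing_seqP => k /=; rewrite le_max lexx. Qed.

Lemma measurable_cond_trunc_max D X k :
  measurable_fun setT (cond_trunc_max D X k : subsigma D -> \bar R).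
Proof.
elim: k => [|k IHk] /=; first exact: measurable_cond_trunc.
by apply: measurable_maxe => //; exact: measurable_cond_trunc.
Qed.

Lemma cond_trunc_max_ae D X k :
  {ae P, forall x, cond_trunc_max D X k x = cond_trunc D X k x}.
Proof.
elim: k => [|k IHk]; first exact: aeW.
apply: filterS2 IHk (cond_trunc_nondecreasing_ae D X k) => x /= -> le_k.
exact: max_r.
Qed.

Definition cond_sup D X x : \bar R := ereal_sup (range (cond_trunc_max D X ^~ x)).

Lemma cond_trunc_max_cvg D X x : cond_trunc_max D X ^~ x @ \oo --> cond_sup D X x.
Proof. exact/ereal_nondecreasing_cvgn/cond_trunc_max_nondecreasing. Qed.

Lemma cond_trunc_max_le_sup D X k x : cond_trunc_max D X k x <= cond_sup D X x.
Proof. by apply: ereal_sup_ubound; exists k. Qed.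

Lemma measurable_cond_sup D X :
  measurable_fun setT (cond_sup D X : subsigma D -> \bar R).
Proof.
apply: (@emeasurable_fun_cvg _ (subsigma D) R setT
  (fun k => cond_trunc_max D X k : subsigma D -> \bar R)) => [k|x _].
  exact: measurable_cond_trunc_max.
exact: cond_trunc_max_cvg.
Qed.

Lemma is_cond_exp_cond_sup D X : D `<=` measurable ->
  measurable_fun setT X -> (forall x, 0 <= X x) ->
  is_cond_exp P <<s D >> X (cond_sup D X).
Proof.
move=> mD mX X0; split.
- by apply/(G_measurable_subsigmaP mD); exact: measurable_cond_sup.
- move=> x; apply: le_trans (cond_trunc_max_le_sup D X 0 x).
  exact: cond_trunc_max_ge0.
move=> A /(sigma_subsigma mD) mAD; have mA := subsigma_measurable mAD.
have -> : \int[P]_(x in A) cond_sup D X x =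
    limn (fun k => \int[P]_(x in A) cond_trunc_max D X k x).
  rewrite -monotone_convergence//.
  - by apply: eq_integral => x _; apply/esym/cvg_lim => //; exact: cond_trunc_max_cvg.
  - move=> k; apply: measurable_funTS.
    exact: subsigma_measurable_fun (measurable_cond_trunc_max D X k).
  - by move=> k x _; exact: cond_trunc_max_ge0.
  - by move=> x _; exact: cond_trunc_max_nondecreasing.
have -> : \int[P]_(x in A) X x = limn (fun k => \int[P]_(x in A) trunc X k x).
  transitivity (\int[P]_(x in A) (1 * X x)).
    by apply: eq_integral => x _; rewrite mul1e.
  rewrite (integral_mule_trunc_cvg X (fun=> 1) A mA mX X0)//.
  by congr (limn _); apply/funext => k; under eq_integral do rewrite mul1e.
congr (limn _); apply/funext => k; rewrite -(integral_cond_trunc D X k _ mAD).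
apply: ae_eq_integral => //.
- exact: measurable_funTS (subsigma_measurable_fun (measurable_cond_trunc D X k)).
- exact: measurable_funTS (subsigma_measurable_fun (measurable_cond_trunc_max D X k)).
- by apply: filterS (cond_trunc_max_ae D X k) => x + _.
Qed.

Lemma integral_mule_le_of_cond_exp_le D X (c : R) : D `<=` measurable ->
  measurable_fun setT X -> (forall x, 0 <= X x) -> (0 <= c)%R ->
  (forall g, is_cond_exp P <<s D >> X g -> {ae P, forall x, g x <= c%:E}) ->
  forall (A : set T) (phi : T -> \bar R), <<s D >> A ->
  measurable_fun setT (phi : subsigma D -> \bar R) -> (forall x, 0 <= phi x) ->
  \int[P]_(x in A) (phi x * X x) <= c%:E * \int[P]_(x in A) phi x.
Proof.
move=> mD mX X0 c0 cond_le A phi /(sigma_subsigma mD) mAD mphi phi0.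
have mA := subsigma_measurable mAD; have mphiT := subsigma_measurable_fun mphi.
have sup_le := cond_le _ (is_cond_exp_cond_sup D X mD mX X0).
have trunc_le k :
    \int[P]_(x in A) (phi x * trunc X k x) <= c%:E * \int[P]_(x in A) phi x.
  rewrite (integral_mule_cond_trunc D X k A phi mAD mphi phi0).
  rewrite -ge0_integralZl ?lee_fin//; last exact: measurable_funTS.
  apply: ae_ge0_le_integral => //.
  - by move=> x _; rewrite mule_ge0 ?cond_trunc_ge0.
  - apply/measurable_funTS/emeasurable_funM => //.
    exact: subsigma_measurable_fun (measurable_cond_trunc D X k).
  - by move=> x _; rewrite mule_ge0 ?lee_fin.
  - by apply/measurable_funTS/emeasurable_funM.
  apply: filterS sup_le => x sup_le_c _; rewrite muleC lee_wpmul2r//.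
  apply: le_trans sup_le_c.
  exact: le_trans (cond_trunc_le_max D X k x) (cond_trunc_max_le_sup D X k x).
rewrite (integral_mule_trunc_cvg X phi A mA mX X0)//; apply: lime_le; last exact: nearW.
apply: ereal_nondecreasing_is_cvgn => k l kl; apply: ge0_le_integral => //.
- by move=> x _; rewrite mule_ge0 ?trunc_ge0.
- by apply/measurable_funTS/emeasurable_funM => //; exact: measurable_trunc.
- by apply/measurable_funTS/emeasurable_funM => //; exact: measurable_trunc.
- by move=> x _; rewrite lee_wpmul2l ?trunc_nondecreasing.
Qed.

End cond_exp_existence.

Section stopped_process.
Context {d : measure_display} {T : measurableType d} {R : realType}.
Implicit Types (E : nat -> T -> \bar R) (tau : T -> option nat).

Definition time_le tau j := [set x | exists k, (k <= j)%N /\ tau x = Some k].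

Definition stop_min E tau j x : \bar R :=
  E (if tau x is Some k then minn k j else j) x.

Lemma stop_min0 E tau x : stop_min E tau 0 x = E 0%N x.
Proof. by rewrite /stop_min; case: (tau x) => [k|]; rewrite ?minn0. Qed.

Lemma stop_minS_le E tau j x : time_le tau j x ->
  stop_min E tau j.+1 x = stop_min E tau j x.
Proof.
by move=> [k [kj tau_k]]; rewrite /stop_min tau_k !(minn_idPl _)// leqW.
Qed.

Lemma stop_minS_gt E tau j x : ~ time_le tau j x ->
  stop_min E tau j.+1 x = E j.+1 x /\ stop_min E tau j x = E j x.
Proof.
rewrite /stop_min /time_le /=; case: (tau x) => [k|] tau_gt //.
have jk : (j < k)%N by rewrite ltnNge; apply/negP => kj; apply: tau_gt; exists k.
by rewrite !(minn_idPr _)// ltnW.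
Qed.

Lemma stop_minE E tau j x : stop_min E tau j.+1 x =
  stop_min E tau j x * (\1_(time_le tau j) x)%:E +
  E j.+1 x * (\1_(~` time_le tau j) x)%:E.
Proof.
rewrite !indicE in_setC; have [tau_j|tau_j] := pselect (time_le tau j x).
  by rewrite mem_set//= mule1 mule0 adde0 stop_minS_le.
have [-> _] := stop_minS_gt E tau j x tau_j.
by rewrite memNset//= mule0 mule1 add0e.
Qed.

End stopped_process.

Section process_growth.
Context {d : measure_display} {T : measurableType d} {R : realType}.
Variable P : probability T R.
Variables (D : nat -> set (set T)) (E : nat -> T -> \bar R) (c : R).
Hypothesis mD : forall j, D j `<=` measurable.
Hypothesis E_adapted :
  forall j, measurable_fun setT (E j : subsigma (D j) -> \bar R).
Hypothesis E_ge0 : forall j x, 0 <= E j x.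
Hypothesis c_ge1 : (1 <= c)%R.
Hypothesis E_step : forall j A, <<s D j >> A ->
  \int[P]_(x in A) E j.+1 x <= c%:E * \int[P]_(x in A) E j x.

Let mE j : measurable_fun setT (E j) := subsigma_measurable_fun (E_adapted j).

Section stopping_time.
Variable tau : T -> option nat.
Hypothesis tau_stop : stopping_time (fun j => <<s D j >>) tau.

Lemma measurable_time_le j : measurable (time_le tau j).
Proof. exact: subsigma_measurable (sigma_subsigma (mD j) (tau_stop j)). Qed.

Lemma measurable_stop_min j : measurable_fun setT (stop_min E tau j).
Proof.
elim: j => [|j IHj].
  exact: eq_measurable_fun _ (fun x _ => esym (stop_min0 E tau x)) (mE 0%N).
apply: eq_measurable_fun _ (fun x _ => esym (stop_minE E tau j x)) _.
apply: emeasurable_funD; apply: emeasurable_funM => //; apply/measurable_EFinP.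
  exact/measurable_indic/measurable_time_le.
exact/measurable_indic/measurableC/measurable_time_le.
Qed.

Lemma integral_stop_min_step j :
  \int[P]_x stop_min E tau j.+1 x <= c%:E * \int[P]_x stop_min E tau j x.
Proof.
set A := time_le tau j; have mA : measurable A := measurable_time_le j.
have mAc : measurable (~` A) := measurableC mA.
have disjA : [disjoint A & ~` A] by rewrite /disj_set setICr.
have split_integral (f : T -> \bar R) : measurable_fun setT f ->
    (forall x, 0 <= f x) ->
    \int[P]_x f x = \int[P]_(x in A) f x + \int[P]_(x in ~` A) f x.
  by move=> mf f0; rewrite -ge0_integral_setU// ?setUCr//; rewrite setUCr.
rewrite (split_integral _ (measurable_stop_min j.+1) (fun x => E_ge0 _ x)).
rewrite (split_integral _ (measurable_stop_min j) (fun x => E_ge0 _ x)).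
have int_ge0 B : 0 <= \int[P]_(x in B) stop_min E tau j x.
  by apply: integral_ge0 => x _; exact: E_ge0.
rewrite muleDr ?ge0_adde_def ?inE ?int_ge0//; apply: leeD.
  rewrite (eq_integral (stop_min E tau j)); last first.
    by move=> x /set_mem; exact: stop_minS_le.
  by rewrite lee_pemull ?int_ge0// lee_fin.
rewrite (eq_integral (E j.+1)); last first.
  by move=> x /set_mem tau_j; case: (stop_minS_gt E tau j x tau_j).
rewrite [X in _ <= _ * X](eq_integral (E j)); last first.
  by move=> x /set_mem tau_j; case: (stop_minS_gt E tau j x tau_j).
by apply: E_step; apply: sigma_algebraC; exact: tau_stop.
Qed.

Lemma integral_stop_min_le j :
  \int[P]_x stop_min E tau j x <= (c ^+ j)%:E * \int[P]_x E 0%N x.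
Proof.
elim: j => [|j IHj].
  by rewrite expr0 mul1e; under eq_integral do rewrite stop_min0.
apply: le_trans (integral_stop_min_step j) _.
by rewrite exprS EFinM -muleA lee_wpmul2l// lee_fin (le_trans ler01 c_ge1).
Qed.

Lemma measurable_tau_eq k : measurable [set x | tau x = Some k].
Proof.
case: k => [|k].
  rewrite (_ : [set x | _] = time_le tau 0); first exact: measurable_time_le.
  apply/seteqP; split => [x tau0|x [k [k0 tau_k]]]; first by exists 0%N.
  by move: k0; rewrite leqn0 => /eqP k0; rewrite /= tau_k k0.
rewrite (_ : [set x | _] = time_le tau k.+1 `\` time_le tau k).
  by apply: measurableD; exact: measurable_time_le.
apply/seteqP; split => [x tau_k|x [[i [ik tau_i]] tau_gt]].
  split; first by exists k.+1.
  by move=> [i [ik]]; rewrite tau_k => -[ki]; move: ik; rewrite -ki ltnn.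
rewrite /= tau_i; congr Some; apply/eqP; rewrite eqn_leq ik ltnNge /=.
by apply/negP => ik'; apply: tau_gt; exists i.
Qed.

Lemma measurable_tau_None : measurable [set x | tau x = None].
Proof.
rewrite (_ : [set x | _] = ~` \bigcup_k time_le tau k).
  by apply/measurableC/bigcup_measurable => k _; exact: measurable_time_le.
apply/seteqP; split => [x tauN [k _ [i [_]]]|x]; first by rewrite tauN.
case tau_x : (tau x) => [k|] //= tau_gt.
by exfalso; apply: tau_gt; exists k => //; exists k.
Qed.

Lemma measurable_stopped : measurable_fun setT (stopped E tau).
Proof.
move=> _ B mB; rewrite setTI.
have mL : measurable_fun setT (fun x => limn_esup (E ^~ x)).
  exact: measurable_fun_limn_esup.
rewrite (_ : stopped E tau @^-1` B =
    ([set x | tau x = None] `&` ((fun x => limn_esup (E ^~ x)) @^-1` B)) `|`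
    \bigcup_k ([set x | tau x = Some k] `&` (E k @^-1` B))).
  apply: measurableU.
    apply: measurableI; first exact: measurable_tau_None.
    by rewrite -[X in measurable X]setTI; exact: mL.
  apply: bigcup_measurable => k _; apply: measurableI; first exact: measurable_tau_eq.
  by rewrite -[X in measurable X]setTI; exact: mE.
apply/seteqP; split => x /=; rewrite /stopped.
  by case tau_x : (tau x) => [k|] Bx; [right; exists k|left].
by move=> [[-> //]|[k _ [-> //]]].
Qed.

Lemma stopped_ge0 x : 0 <= stopped E tau x.
Proof.
rewrite /stopped; case: (tau x) => [k|] //; rewrite limn_esup_lim.
apply: lime_ge; first exact: is_cvg_esups.
apply: nearW => n; apply: le_trans (E_ge0 n x) _.
by apply: ereal_sup_ubound; exists n => /=.
Qed.

Lemma integral_stopped_le r : P (time_le tau r) = 1 ->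
  \int[P]_x stopped E tau x <= (c ^+ r)%:E * \int[P]_x E 0%N x.
Proof.
move=> P_le_r; have mN := measurableC (measurable_time_le r).
have PN0 : P (~` time_le tau r) = 0.
  by rewrite probability_setC ?P_le_r ?subee//; exact: measurable_time_le.
apply: le_trans (integral_stop_min_le r).
rewrite (ge0_negligible_integral mN _ measurable_stopped
  (fun x _ => stopped_ge0 x) PN0)//.
rewrite [leRHS](ge0_negligible_integral mN _ (measurable_stop_min r)
  (fun x _ => E_ge0 _ x) PN0)//.
rewrite le_eqVlt; apply/orP; left; apply/eqP.
apply: eq_integral => x /set_mem [_ /= /contrapT [k [kr tau_k]]].
by rewrite /stopped /stop_min tau_k (minn_idPl kr).
Qed.

End stopping_time.

Lemma integral_process_le j :
  \int[P]_x E j x <= (c ^+ j)%:E * \int[P]_x E 0%N x.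
Proof.
apply: (integral_stop_min_le (fun=> None)) => k.
rewrite (_ : [set x | _] = set0); first exact: sigma_algebra0.
by apply/seteqP; split => [x [i [_ //]]|//].
Qed.

Lemma integrable_process j : \int[P]_x E 0%N x < +oo -> P.-integrable setT (E j).
Proof.
move=> E0_lty; apply/integrableP; split; first exact: mE.
have E0_fin : \int[P]_x E 0%N x \is a fin_num.
  by rewrite ge0_fin_numE// integral_ge0.
rewrite (eq_integral (E j)); last by move=> x _; rewrite gee0_abs.
apply: le_lt_trans (integral_process_le j) _.
by rewrite -(fineK E0_fin) -EFinM ltry.
Qed.

Lemma integral_cond_exp_sub_pos_le n g :
  P.-integrable setT (E n) -> P.-integrable setT (E n.+1) ->
  is_cond_exp P <<s D n >> (E n.+1) g ->
  \int[P]_x maxe (g x - E n x) 0 <= (c - 1)%:E * \int[P]_x E n x.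
Proof.
move=> iEn iEn1 [/(G_measurable_subsigmaP (mD n)) mg g_ge0 int_g].
have mBD : (@measurable _ (subsigma (D n))) [set x | E n x < g x].
  by rewrite -[X in measurable X]setTI; exact: measurable_lte.
set B := [set x | E n x < g x] in mBD *.
have mB : measurable B := subsigma_measurable mBD.
have ig : P.-integrable setT g.
  apply/integrableP; split; first exact: subsigma_measurable_fun mg.
  rewrite (eq_integral g); last by move=> x _; rewrite gee0_abs.
  rewrite -int_g; last exact: (subsigma_sigma (D := D n) measurableT).
  by have /integrableP[_] := iEn1; under eq_integral do rewrite gee0_abs ?E_ge0//.
have -> : \int[P]_x maxe (g x - E n x) 0 = \int[P]_(x in B) (g x - E n x).
  rewrite [RHS]integral_mkcond; apply: eq_integral => x _; rewrite patchE.
  case: ifPn => [/set_mem Bx|/negP Bx]; first by rewrite max_l// ltW// sube_gt0.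
  by rewrite max_r// sube_le0 leNgt; apply/negP => ?; apply: Bx; exact/mem_set.
rewrite integralB//; [|exact: integrableS ig|exact: integrableS iEn].
rewrite -(int_g B (subsigma_sigma mBD)).
have finB : \int[P]_(x in B) E n x \is a fin_num.
  by apply: integrable_fin_num => //; exact: integrableS iEn.
apply: (@le_trans _ _ ((c - 1)%:E * \int[P]_(x in B) E n x)).
  rewrite leeBlDr// EFinB muleBl// mul1e subeK//.
  by apply: E_step; exact: subsigma_sigma mBD.
rewrite lee_wpmul2l ?lee_fin ?subr_ge0//.
by apply: ge0_subset_integral => //; exact: mE.
Qed.

Lemma exp_delta_plus_le_process n (eps : R) : \int[P]_x E 0%N x < +oo ->
  ((c - 1) * c ^+ n)%:E * \int[P]_x E 0%N x <= eps%:E ->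
  exp_delta_plus_le P (fun j => <<s D j >>) E n eps%:E.
Proof.
move=> E0_lty le_eps; split; first exact: integrable_process.
move=> g g_cond; apply: le_trans le_eps.
apply: le_trans (integral_cond_exp_sub_pos_le n g _ _ g_cond) _;
  try exact: integrable_process.
by rewrite EFinM -muleA lee_wpmul2l ?lee_fin ?subr_ge0 ?integral_process_le.
Qed.

End process_growth.

Section product_process.
Context {d : measure_display} {T : measurableType d} {R : realType}.
Variable e : nat -> nat -> T -> \bar R.
Hypothesis me : forall m n, measurable_fun setT (e m n).
Hypothesis e_ge0 : forall m n x, 0 <= e m n x.

Definition gen_events m j : set (set T) := [set A | exists i, (i <= j)%N /\
  exists B : set (\bar R), measurable B /\ A = e m i @^-1` B].

Lemma gen_events_measurable m j : gen_events m j `<=` measurable.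
Proof.
by move=> _ [i [_ [B [mB ->]]]]; rewrite -[X in measurable X]setTI; exact: me.
Qed.

Lemma measurable_fun_gen_events_le m {i j} {f : T -> \bar R} : (i <= j)%N ->
  measurable_fun setT (f : subsigma (gen_events m i) -> \bar R) ->
  measurable_fun setT (f : subsigma (gen_events m j) -> \bar R).
Proof.
move=> ij mf _ B mB; have := mf measurableT B mB.
apply: sub_sigma_algebra2 => A [[k [ki eA]] mA]; split => //.
by exists k; split => //; exact: leq_trans ki ij.
Qed.

Lemma e_adapted m {i j} : (i <= j)%N ->
  measurable_fun setT (e m i : subsigma (gen_events m j) -> \bar R).
Proof.
move=> ij _ B mB; rewrite setTI; apply: sub_gen_smallest; split.
  by exists i; split => //; exists B.
by rewrite -[X in measurable X]setTI; exact: me.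
Qed.

Lemma prodE0 m x : prodE e m 0 x = e m 0%N x.
Proof. exact: big_ord1. Qed.

Lemma prodES m j x : prodE e m j.+1 x = prodE e m j x * e m j.+1 x.
Proof. exact: big_ord_recr. Qed.

Lemma prodE_ge0 m j x : 0 <= prodE e m j x.
Proof. by apply: prode_ge0 => i _; exact: e_ge0. Qed.

Lemma prodE_adapted m j :
  measurable_fun setT (prodE e m j : subsigma (gen_events m j) -> \bar R).
Proof.
elim: j => [|j IHj].
  by apply: (eq_measurable_fun _ _ (e_adapted m (leqnn 0))) => x _; rewrite prodE0.
have mprod : measurable_fun setT
    ((fun x => prodE e m j x * e m j.+1 x) : subsigma (gen_events m j.+1) -> \bar R).
  exact: emeasurable_funM (measurable_fun_gen_events_le m (leqnSn j) IHj)
    (e_adapted m (leqnn _)).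
by apply: (eq_measurable_fun _ _ mprod) => x _; rewrite prodES.
Qed.

Lemma prodE_step (P : probability T R) (c : R) m : (0 <= c)%R ->
  (forall n g, is_cond_exp P (gen_filtration e m n) (e m n.+1) g ->
     {ae P, forall x, g x <= c%:E}) ->
  forall j A, <<s gen_events m j >> A ->
  \int[P]_(x in A) prodE e m j.+1 x <= c%:E * \int[P]_(x in A) prodE e m j x.
Proof.
move=> c_ge0 cond_le j A Aj; under eq_integral do rewrite prodES.
apply: (integral_mule_le_of_cond_exp_le P _ _ _ (@gen_events_measurable m j)) => //.
- exact: cond_le.
- exact: prodE_adapted.
- exact: prodE_ge0.
Qed.

End product_process.

Lemma expr1D_le_expR {R : realType} (x : R) n :
  (0 <= x)%R -> ((1 + x) ^+ n <= expR (n%:R * x))%R.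
Proof.
move=> x_ge0; rewrite expRM_natl lerXn2r ?nnegrE ?expR_ge0 ?addr_ge0//.
exact: expR_ge1Dx.
Qed.

Section asymptotic_e_process.
Context {d : measure_display} {T : measurableType d} {R : realType}.
Variables (Pset : set (probability T R)) (e : nat -> nat -> T -> \bar R).
Variable dm : nat -> R.
Hypothesis me : forall m n, measurable_fun setT (e m n).
Hypothesis e_ge0 : forall m n x, 0 <= e m n x.
Hypothesis e0_evar : asymp_evar Pset (fun m => e m 0%N).
Hypothesis dm_ge0 : forall m, (0 <= dm m)%R.
Hypothesis cond_le : forall m n (P : probability T R), Pset P ->
  forall g, is_cond_exp P (gen_filtration e m n) (e m n.+1) g ->
    {ae P, forall x, g x <= 1 + (dm m)%:E}.

Let c_ge1 m : (1 <= 1 + dm m)%R. Proof. by rewrite lerDl. Qed.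

Let prodE_growth m P : Pset P -> forall j A, <<s gen_events e m j >> A ->
  \int[P]_(x in A) prodE e m j.+1 x <= (1 + dm m)%:E * \int[P]_(x in A) prodE e m j x.
Proof.
move=> PP; apply: prodE_step => //; first exact: le_trans (c_ge1 m).
by move=> n g /(cond_le m n P PP); rewrite EFinD.
Qed.

Let integral_prodE0_le (a : R) : (0 < a)%R ->
  \forall m \near \oo, forall P, Pset P -> \int[P]_x prodE e m 0 x <= (1 + a)%:E.
Proof.
move=> a_gt0; near=> m => P PP; under eq_integral do rewrite prodE0.
by rewrite EFinD; move: P PP; near: m; exact: e0_evar.
Unshelve. all: by end_near.
Qed.

Lemma asymp_supermart_prodE : dm @ \oo --> 0%R ->
  asymp_supermart Pset (gen_filtration e) (prodE e).
Proof.
move=> dm_cvg0 n eps eps_gt0.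
(* The casts to [R^o] let [cvg_cst] find the topology of [R]. *)
pose proof (cvg_comp _ _ (cvgD (cvg_cst _) dm_cvg0)
  (@exprn_continuous R n (1 + 0)%R)) as pow_cvg.
pose proof (cvgM dm_cvg0 (cvgM pow_cvg (cvg_cst (1 + 1 : R^o)%R))) as u_cvg0.
rewrite mul0r in u_cvg0.
near=> m => P PP.
have E0_le : \int[P]_x prodE e m 0 x <= (1 + 1)%:E.
  by move: P PP; near: m; exact: integral_prodE0_le.
apply: (exp_delta_plus_le_process P _ _ _ (gen_events_measurable e me m)
  (prodE_adapted e me m) (prodE_ge0 e e_ge0 m) (c_ge1 m) (prodE_growth m P PP)).
  exact: le_lt_trans E0_le (ltry _).
rewrite addrAC subrr add0r.
apply: le_trans (lee_wpmul2l _ E0_le) _.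
  by rewrite lee_fin mulr_ge0 ?exprn_ge0 ?addr_ge0.
rewrite -EFinM lee_fin -mulrA; near: m; exact: cvgr_le u_cvg0 _ eps_gt0.
Unshelve. all: by end_near.
Qed.

Lemma r_asymp_eprocess_prodE (r : nat -> nat) :
  (fun m => (r m)%:R * dm m)%R @ \oo --> 0%R ->
  r_asymp_eprocess Pset r (gen_filtration e) (prodE e).
Proof.
move=> rdm_cvg0 tau tau_stop eps eps_gt0.
have eps2_gt0 : (0 < eps / 2)%R by rewrite divr_gt0.
pose proof (cvgM (cvg_comp _ _ rdm_cvg0 (@continuous_expR R 0%R))
  (cvg_cst (1 + eps / 2 : R^o)%R)) as v_cvg.
rewrite expR0 mul1r in v_cvg.
have v_lt : (1 + eps / 2 < 1 + eps)%R by rewrite ltrD2l; lra.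
near=> m => P PP; have [tau_stop_m tau_le_r] := tau_stop m.
have E0_le : \int[P]_x prodE e m 0 x <= (1 + eps / 2)%:E.
  by move: P PP; near: m; exact: integral_prodE0_le.
apply: le_trans (integral_stopped_le P _ _ _ (gen_events_measurable e me m)
  (prodE_adapted e me m) (prodE_ge0 e e_ge0 m) (c_ge1 m) (prodE_growth m P PP)
  _ tau_stop_m _ (tau_le_r P PP)) _.
apply: le_trans (lee_wpmul2l _ E0_le) _; first by rewrite lee_fin exprn_ge0 ?addr_ge0.
rewrite -EFinM lee_fin.
apply: le_trans (_ : _ <= expR ((r m)%:R * dm m) * (1 + eps / 2))%R _.
  by apply: ler_wpM2r; [rewrite addr_ge0// ltW|exact: expr1D_le_expR].
by near: m; exact: cvgr_le v_cvg _ v_lt.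
Unshelve. all: by end_near.
Qed.

End asymptotic_e_process.

Theorem mainTheorem10 (d : measure_display) (T : measurableType d) (R : realType)
  (Pset : set (probability T R)) (e : nat -> nat -> T -> \bar R) (dm : nat -> R) :
  (forall m n, measurable_fun setT (e m n)) ->
  (forall m n x, 0 <= e m n x) ->
  (forall n, asymp_evar Pset (fun m => e m n)) ->
  (forall m, (0 <= dm m)%R) ->
  (forall m n (P : probability T R), Pset P ->
     forall g, is_cond_exp P (gen_filtration e m n) (e m n.+1) g ->
       {ae P, forall x, g x <= 1 + (dm m)%:E}) ->
  dm @ \oo --> 0%R ->
  asymp_supermart Pset (gen_filtration e) (prodE e) /\
  (forall r : nat -> nat, (fun m => (r m)%:R * dm m)%R @ \oo --> 0%R ->
     r_asymp_eprocess Pset r (gen_filtration e) (prodE e)).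
Proof.
(* Only the first factors e_{m,0} need to form an asymptotic e-variable. *)
move=> me e_ge0 e_evar dm_ge0 cond_le dm_cvg0; split.
  exact: asymp_supermart_prodE me e_ge0 (e_evar 0%N) dm_ge0 cond_le dm_cvg0.
by move=> r; exact: r_asymp_eprocess_prodE me e_ge0 (e_evar 0%N) dm_ge0 cond_le r.
Qed.
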